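(* Let $n,g,k,t$ be positive integers with $t\le k$. If there exist an orthogonal array OA$(t,k,g)$ and a large set with multiplicity LS$(t,k,n;g^{k-t})$, then there exists a large set of H-designs LH$(n,g,k,t)$.
   Context: A Steiner system S$(t,k,n)$ is a pair $(Q,B)$ where $Q$ is an $n$-set and $B$ is a collection of $k$-subsets (blocks) of $Q$ such that every $t$-subset of $Q$ is contained in exactly one block. A large set with multiplicity $\mu$, LS$(t,k,n;\mu)$, is a family (the same system may occur more than once) of Steiner systems S$(t,k,n)$ on a common $n$-set $Q$ such that every $k$-subset of $Q$ is a block of exactly $\mu$ of the systems. An orthogonal array OA$(t,k,g)$ is a $g^t\times k$ matrix with entries from $\mathbb{Z}_g$ such that in the submatrix formed by any $t$ columns each ordered $t$-tuple over $\mathbb{Z}_g$ occurs exactly once as a row. An H-design H$(n,g,k,t)$ is a triple $(Q,G,B)$ where $Q$ is a set of $ng$ points, $G$ is a partition of $Q$ into $n$ groups of size $g$, and $B$ is a set of $k$-subsets of $Q$ (blocks) such that each block meets each group in at most one point and any $t$ points from $t$ distinct groups lie in exactly one block. A large set of H-designs LH$(n,g,k,t)$ is a partition of the set of all $k$-subsets of $Q$ meeting each group in at most one point into pairwise disjoint block sets, each forming an H-design H$(n,g,k,t)$ with the same $Q$ and $G$. *)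

From mathcomp Require Import all_boot.
Unset Printing Implicit Defensive.

Definition steiner_system (t k n : nat) (B : {set {set 'I_n}}) : Prop :=
  (forall b, b \in B -> #|b| = k) /\
  (forall T : {set 'I_n}, #|T| = t -> #|[set b in B | T \subset b]| = 1).

(* LS(t,k,n;mu): a family (repetitions allowed, hence a list) of Steiner
   systems S(t,k,n) on the common n-set 'I_n such that every k-subset is a
   block of exactly mu of the systems. *)
Definition large_set_mult (t k n mu : nat) (L : seq {set {set 'I_n}}) : Prop :=
  (forall B, B \in L -> steiner_system t k n B) /\
  (forall K : {set 'I_n}, #|K| = k -> count (fun B : {set {set 'I_n}} => K \in B) L = mu).

(* OA(t,k,g): a g^t x k matrix with entries in Z_g (represented by 'I_g) such
   that, for any t (distinct, ordered) columns, each ordered t-tuple over Z_g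
   occurs exactly once as a row of the corresponding submatrix. *)
Definition orthogonal_array (t k g : nat) (M : 'I_(g ^ t) -> 'I_k -> 'I_g) : Prop :=
  forall (c : {ffun 'I_t -> 'I_k}), injective c ->
  forall (v : 'I_t -> 'I_g),
    #|[set r : 'I_(g ^ t) | [forall i : 'I_t, M r (c i) == v i]]| = 1.

Definition transverse (T : finType) (G : {set {set T}}) (S : {set T}) : bool :=
  [forall X in G, #|S :&: X| <= 1].

Definition hgroups (T : finType) (n g : nat) (G : {set {set T}}) : Prop :=
  #|T| = n * g /\ partition G [set: T] /\ #|G| = n /\
  (forall X, X \in G -> #|X| = g).

Definition H_design (T : finType) (n g k t : nat) (G : {set {set T}})
    (B : {set {set T}}) : Prop :=
  hgroups T n g G /\
  (forall b, b \in B -> #|b| = k /\ transverse T G b) /\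
  (forall S : {set T}, #|S| = t -> transverse T G S ->
     #|[set b in B | S \subset b]| = 1).

Definition transverse_ksets (T : finType) (k : nat) (G : {set {set T}})
  : {set {set T}} := [set K : {set T} | (#|K| == k) && transverse T G K].

Definition large_set_H (T : finType) (n g k t : nat) (G : {set {set T}})
    (P : {set {set {set T}}}) : Prop :=
  hgroups T n g G /\
  partition P (transverse_ksets T k G) /\
  (forall B, B \in P -> H_design T n g k t G B).

From mathcomp Require Import all_boot all_algebra zify.
Set Implicit Arguments. Unset Strict Implicit. Unset Printing Implicit Defensive.
Import GRing.Theory.

(* Take the points I_n x Z_g, grouped by first coordinate.  A transverse k-set
   is a pair (K, v) of a k-subset K = {x_1, ..., x_k} of I_n and a vector v of
   Z_g^k, namely {(x_i, v_i)}.  The rows of an OA(t,k,g), translated by the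
   vectors (0,...,0,w) with w in Z_g^(k-t), partition Z_g^k into g^(k-t)
   orthogonal arrays: the first t coordinates of a vector fix the row, and the
   last k - t then fix w.  Each k-subset K lies in exactly g^(k-t) systems of
   the large set; pair them bijectively with the translates.  The j-th
   H-design consists of the (K, v) with K a block of the j-th system and v in
   the translate paired with (K, j); a transverse t-set S lies in a block of it
   iff K is the unique block over the base of S and v takes prescribed values
   on t columns, which the translate does exactly once.
*)

Lemma card_nth_count (T : Type) (s : seq T) (a : pred T) x0 :
  #|[set j : 'I_(size s) | a (nth x0 s j)]| = count a s.
Proof. by rewrite -sum1dep_card -sum1_count (big_nth x0) big_mkord. Qed.

Section EnumMatch.
Variables (T U : finType) (A : {set T}) (u0 : U).

Definition enum_match (x : T) : U := nth u0 (enum U) (index x (enum A)).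

Hypothesis card_A : #|A| = #|U|.

Lemma enum_match_inj : {in A &, injective enum_match}.
Proof.
have lt_index x : x \in A -> index x (enum A) < size (enum U).
  by rewrite -cardE -card_A cardE index_mem mem_enum.
move=> x y xA yA /eqP; rewrite nth_uniq ?enum_uniq ?lt_index // => /eqP.
by move/(congr1 (nth x (enum A))); rewrite !nth_index ?mem_enum.
Qed.

Lemma enum_match_onto u : exists2 x, x \in A & enum_match x = u.
Proof.
have im_A : enum_match @: A = [set: U].
  apply/eqP; rewrite eqEcard subsetT cardsT (card_in_imset enum_match_inj).
  by rewrite card_A leqnn.
have /imsetP [x xA ->] : u \in enum_match @: A by rewrite im_A in_setT.
by exists x.
Qed.

End EnumMatch.

Section TranslatedArrays.
Variables (t k g' : nat).
Local Notation g := g'.+1.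
Variable M : 'I_(g ^ t) -> 'I_k -> 'I_g.

Definition head_col (le_tk : t <= k) (m : 'I_t) : 'I_k := widen_ord le_tk m.

Lemma tail_col_subproof (j : 'I_(k - t)) : t + j < k.
Proof. have := ltn_ord j; lia. Qed.

Definition tail_col (j : 'I_(k - t)) : 'I_k := Ordinal (tail_col_subproof j).

Lemma head_or_tail_col (le_tk : t <= k) (i : 'I_k) :
  (exists m, i = head_col le_tk m) \/ (exists j, i = tail_col j).
Proof.
case: (ltnP i t) => [lt_it | le_ti].
  by left; exists (Ordinal lt_it); apply: val_inj.
have lt_j : i - t < k - t by have := ltn_ord i; lia.
by right; exists (Ordinal lt_j); apply: val_inj => /=; lia.
Qed.

(* The vector (0,...,0,w) of Z_g^k; the test t <= i is needed because i - t
   truncates to 0 when i < t. *)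
Definition pad (w : {ffun 'I_(k - t) -> 'I_g}) (i : 'I_k) : 'I_g :=
  if insub (i - t) is Some j then (if t <= i then w j else 0%R) else 0%R.

Lemma pad_head le_tk w m : pad w (head_col le_tk m) = 0%R.
Proof. by rewrite /pad /= leqNgt ltn_ord; case: insub. Qed.

Lemma pad_tail w j : pad w (tail_col j) = w j.
Proof.
rewrite /pad /= leq_addr addKn.
by case: insubP => [j' _ /val_inj -> | ]; rewrite ?ltn_ord.
Qed.

Definition translate w (r : 'I_(g ^ t)) : {ffun 'I_k -> 'I_g} :=
  [ffun i => M r i + pad w i]%R.

Definition translates w : {set {ffun 'I_k -> 'I_g}} :=
  [set translate w r | r : 'I_(g ^ t)].

Hypothesis le_tk : t <= k.
Hypothesis oaM : orthogonal_array t k g M.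

Let head_cols : {ffun 'I_t -> 'I_k} := [ffun m => head_col le_tk m].

Let head_cols_inj : injective head_cols.
Proof. by move=> m m'; rewrite !ffunE => /(congr1 val) /= /val_inj. Qed.

Lemma oa_row_exists (c : {ffun 'I_t -> 'I_k}) : injective c ->
  forall u : 'I_t -> 'I_g, exists r, forall m, M r (c m) = u m.
Proof.
move=> inj_c u; have /eqP/cards1P [r rows_u] := oaM inj_c u.
have /[!inE] /forallP row_r : r \in [set r | [forall m, M r (c m) == u m]].
  by rewrite rows_u set11.
by exists r => m; apply/eqP.
Qed.

Lemma oa_row_unique (c : {ffun 'I_t -> 'I_k}) : injective c ->
  forall r r', (forall m, M r (c m) = M r' (c m)) -> r = r'.
Proof.
move=> inj_c r r' eq_rr'; pose u m := M r (c m).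
have /eqP/cards1P [r0 rows_u] := oaM inj_c u.
have in_rows s : [forall m, M s (c m) == u m] -> s = r0.
  by move=> row_s; apply/set1P; rewrite -rows_u inE.
rewrite [r]in_rows; last by apply/forallP.
by rewrite [r']in_rows //; apply/forallP => m; rewrite -eq_rr'.
Qed.

Lemma translate_inj w : injective (translate w).
Proof.
move=> r r' /ffunP eq_rr'; apply: (oa_row_unique head_cols_inj) => m.
by have := eq_rr' (head_cols m); rewrite !ffunE => /addIr.
Qed.

Lemma translates_cover v : exists w, v \in translates w.
Proof.
have [r row_r] := oa_row_exists head_cols_inj (fun m => v (head_cols m)).
exists [ffun j => v (tail_col j) - M r (tail_col j)]%R.
apply/imsetP; exists r => //; apply/ffunP => i; rewrite ffunE.
have [[m ->] | [j ->]] := head_or_tail_col le_tk i.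
  by rewrite pad_head addr0; have := row_r m; rewrite ffunE.
by rewrite pad_tail ffunE addrC subrK.
Qed.

Lemma translates_disjoint w w' v :
  v \in translates w -> v \in translates w' -> w = w'.
Proof.
move=> /imsetP [r _ ->] /imsetP [r' _] /ffunP eq_v.
have eq_rr' : r = r'.
  apply: (oa_row_unique head_cols_inj) => m; have := eq_v (head_cols m).
  by rewrite !ffunE !pad_head !addr0.
apply/ffunP => j; have := eq_v (tail_col j).
by rewrite eq_rr' !ffunE !pad_tail => /addrI.
Qed.

Lemma translates_orthogonal_array w (c : {ffun 'I_t -> 'I_k}) :
  injective c -> forall u : 'I_t -> 'I_g,
  #|[set v in translates w | [forall m, v (c m) == u m]]| = 1.
Proof.
move=> inj_c u.
suff -> : [set v in translates w | [forall m, v (c m) == u m]] =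
    translate w @: [set r | [forall m, M r (c m) == (u m - pad w (c m))%R]].
  by rewrite card_imset ?oaM //; apply: translate_inj.
apply/setP => v; rewrite !inE; apply/andP/imsetP.
  move=> [/imsetP [r _ ->] /forallP row_r]; exists r => //.
  rewrite inE; apply/forallP => m.
  by have := row_r m; rewrite ffunE => /eqP <-; rewrite addrK.
move=> [r /[!inE] /forallP row_r ->]; split; first exact: imset_f.
by apply/forallP => m; rewrite ffunE (eqP (row_r m)) subrK.
Qed.

End TranslatedArrays.

Section TransverseSets.
Variables (n' g' : nat).
Local Notation n := n'.+1.
Local Notation g := g'.+1.

Definition point : finType := ('I_n * 'I_g)%type.

Definition fibre (x : 'I_n) : {set point} := setX [set x] [set: 'I_g].

Definition fibres : {set {set point}} := [set fibre x | x : 'I_n].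

Local Notation transverse := (transverse point fibres).

Lemma mem_fibre x (p : point) : (p \in fibre x) = (p.1 == x).
Proof. by case: p => y z; rewrite in_setX in_set1 in_setT andbT. Qed.

Lemma fibre_inj : injective fibre.
Proof.
move=> x y eq_xy; have := mem_fibre y (x, ord0).
by rewrite -eq_xy mem_fibre eqxx => /esym/eqP.
Qed.

Lemma hgroups_fibres : hgroups point n g fibres.
Proof.
split; first by rewrite card_prod !card_ord.
split; last split.
- apply/and3P; split.
  + apply/eqP/setP => p; rewrite inE; apply/bigcupP.
    by exists (fibre p.1); [apply: imset_f | rewrite mem_fibre].
  + apply/trivIsetP => _ _ /imsetP [x _ ->] /imsetP [y _ ->] neq_xy.
    rewrite -setI_eq0; apply/eqP/setP => p; rewrite in_setI !mem_fibre in_set0.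
    by apply/negP => /andP [/eqP px /eqP py]; rewrite -px -py eqxx in neq_xy.
  + apply/imsetP => [[x _ /setP /(_ (x, ord0))]].
    by rewrite in_set0 mem_fibre eqxx.
- by rewrite card_imset ?card_ord //; apply: fibre_inj.
- by move=> _ /imsetP [x _ ->]; rewrite cardsX cards1 cardsT card_ord mul1n.
Qed.

Lemma transverseP (S : {set point}) :
  reflect {in S &, injective fst} (transverse S).
Proof.
apply: (iffP forallP) => [trS p q pS qS eq_pq | inj_S X].
  have /implyP /(_ (imset_f _ _)) /card_le1_eqP := trS (fibre p.1).
  by apply; rewrite ?in_setI ?mem_fibre ?eq_pq ?eqxx ?pS ?qS.
apply/implyP => /imsetP [x _ ->]; apply/card_le1_eqP => p q.
rewrite !in_setI !mem_fibre => /andP [pS /eqP px] /andP [qS /eqP qx].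
by apply: inj_S => //; rewrite px qx.
Qed.

Definition base (S : {set point}) : {set 'I_n} := fst @: S.

Lemma card_base S : transverse S -> #|base S| = #|S|.
Proof. by move/transverseP; apply: card_in_imset. Qed.

Section Graphs.
Variable k' : nat.
Local Notation k := k'.+1.

Definition nth_in (K : {set 'I_n}) (i : 'I_k) : 'I_n := nth ord0 (enum K) i.

Definition index_in (K : {set 'I_n}) (x : 'I_n) : 'I_k :=
  inord (index x (enum K)).

Definition graph (K : {set 'I_n}) (v : {ffun 'I_k -> 'I_g}) : {set point} :=
  [set (nth_in K i, v i) | i : 'I_k].

Section FixedBase.
Variable K : {set 'I_n}.
Hypothesis card_K : #|K| = k.

Lemma nth_in_mem i : nth_in K i \in K.
Proof. by rewrite -mem_enum mem_nth // -cardE card_K. Qed.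

Lemma nth_inK : {in K, cancel (index_in K) (nth_in K)}.
Proof.
move=> x xK; rewrite /nth_in /index_in inordK ?nth_index ?mem_enum //.
by rewrite -card_K cardE index_mem mem_enum.
Qed.

Lemma index_inK : cancel (nth_in K) (index_in K).
Proof.
move=> i; have lt_i : i < size (enum K) by rewrite -cardE card_K.
by rewrite /index_in /nth_in index_uniq ?enum_uniq // inord_val.
Qed.

Lemma mem_graph v p :
  (p \in graph K v) = (p.1 \in K) && (v (index_in K p.1) == p.2).
Proof.
apply/imsetP/andP => [[i _ ->] | [pK /eqP vp]].
  by rewrite nth_in_mem index_inK.
by exists (index_in K p.1); rewrite // nth_inK // vp -surjective_pairing.
Qed.

Lemma card_graph v : #|graph K v| = k.
Proof.
by rewrite card_imset ?card_ord // => i j [/(can_inj index_inK)].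
Qed.

Lemma graph_transverse v : transverse (graph K v).
Proof.
apply/transverseP => [[x y] [x' y']].
by rewrite !mem_graph /= => /andP [_ /eqP <-] /andP [_ /eqP <-] ->.
Qed.

Lemma base_graph v : base (graph K v) = K.
Proof.
apply/setP => x; apply/imsetP/idP => [[p] | xK].
  by rewrite mem_graph => /andP [pK _] ->.
by exists (x, v (index_in K x)); rewrite // mem_graph xK eqxx.
Qed.

Lemma graph_inj : injective (graph K).
Proof.
move=> v w eq_vw; apply/ffunP => i.
have := mem_graph w (nth_in K i, v i).
by rewrite -eq_vw mem_graph /= nth_in_mem index_inK eqxx => /esym/eqP.
Qed.

Lemma subset_graph_coords (t : nat) (S : {set point}) :
  #|S| = t -> transverse S -> base S \subset K ->
  exists (c : {ffun 'I_t -> 'I_k}) (u : 'I_t -> 'I_g), injective c /\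
    forall v, (S \subset graph K v) = [forall m, v (c m) == u m].
Proof.
move=> card_S /transverseP inj_S baseSK.
pose s m : point := enum_val (cast_ord (esym card_S) m).
have sS m : s m \in S by apply: enum_valP.
have s1K m : (s m).1 \in K by apply: (subsetP baseSK); apply: imset_f.
exists [ffun m => index_in K (s m).1], (fun m => (s m).2); split.
  move=> m m'; rewrite !ffunE => /(can_in_inj nth_inK (s1K m) (s1K m')).
  by move/(inj_S _ _ (sS m) (sS m'))/enum_val_inj/cast_ord_inj.
move=> v; apply/subsetP/forallP => [subS m | vS p pS].
  by have := subS _ (sS m); rewrite mem_graph ffunE => /andP [].
have -> : p = s (cast_ord card_S (enum_rank_in pS p)).
  by rewrite /s cast_ordK enum_rankK_in.
have := vS (cast_ord card_S (enum_rank_in pS p)).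
by rewrite ffunE mem_graph s1K.
Qed.

End FixedBase.

Lemma transverse_graph_base b : transverse b -> #|b| = k ->
  exists v, b = graph (base b) v.
Proof.
move=> trb card_b; have card_base_b : #|base b| = k by rewrite card_base.
exists [ffun i => odflt ord0 [pick y | (nth_in (base b) i, y) \in b]].
apply/setP => [[x z]]; rewrite mem_graph // ffunE /=.
have [/imsetP [q qb ->] | xb] := boolP (x \in base b); last first.
  by apply/negbTE; apply: contra xb => xzb; apply: (imset_f fst xzb).
rewrite nth_inK ?imset_f //; case: pickP => [y qyb | /(_ q.2)].
  apply/idP/eqP => [qzb | <- //].
  by have /transverseP /(_ _ _ qyb qzb erefl) [] := trb.
by rewrite -surjective_pairing qb.
Qed.

Section Construction.
Variables (t : nat) (M : 'I_(g ^ t) -> 'I_k -> 'I_g) (L : seq {set {set 'I_n}}).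
Hypotheses (le_tk : t <= k) (oaM : orthogonal_array t k g M).
Hypothesis lsL : large_set_mult t k n (g ^ (k - t)) L.

Definition system (j : 'I_(size L)) : {set {set 'I_n}} := nth set0 L j.

Definition systems_with (K : {set 'I_n}) : {set 'I_(size L)} :=
  [set j | K \in system j].

(* For #|K| = k, a bijection from the systems containing K onto Z_g^(k-t),
   which indexes the translates of the array. *)
Definition label (K : {set 'I_n}) : 'I_(size L) -> {ffun 'I_(k - t) -> 'I_g} :=
  enum_match (systems_with K) [ffun => 0%R].

Lemma system_steiner j : steiner_system t k n (system j).
Proof. by apply: lsL.1; rewrite mem_nth. Qed.

Lemma card_system_block j (K : {set 'I_n}) : K \in system j -> #|K| = k.
Proof. exact: (system_steiner j).1. Qed.

Lemma card_systems_with (K : {set 'I_n}) :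
  #|K| = k -> #|systems_with K| = #|{ffun 'I_(k - t) -> 'I_g}|.
Proof.
move=> card_K; rewrite (card_nth_count L (fun B => K \in B)) lsL.2 //.
by rewrite card_ffun !card_ord.
Qed.

Definition design (j : 'I_(size L)) : {set {set point}} :=
  [set graph K v | K : {set 'I_n} in system j,
                   v : {ffun 'I_k -> 'I_g} in translates M (label K j)].

Lemma designP j b :
  reflect (exists K v, [/\ K \in system j, v \in translates M (label K j)
                            & b = graph K v])
          (b \in design j).
Proof.
apply: (iffP imset2P) => [[K v sysK trv ->] | [K [v [sysK trv ->]]]].
  by exists K, v.
by exists K v.
Qed.

Lemma design_block j b : b \in design j -> #|b| = k /\ transverse b.
Proof.
move=> /designP [K [v [/card_system_block card_K _ ->]]].
by split; [apply: card_graph | apply: graph_transverse].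
Qed.

Lemma design_cover b :
  b \in transverse_ksets point k fibres -> exists j, b \in design j.
Proof.
rewrite inE => /andP [/eqP card_b trb].
have [v ->] := transverse_graph_base trb card_b.
have card_base_b : #|base b| = k by rewrite card_base.
have [w vw] := translates_cover le_tk oaM v.
have [j /[!inE] sys_j label_j] :=
  enum_match_onto [ffun => 0%R] (card_systems_with card_base_b) w.
by exists j; apply/designP; exists (base b), v; rewrite /label label_j.
Qed.

Lemma design_disjoint j j' b : b \in design j -> b \in design j' -> j = j'.
Proof.
move=> /designP [K [v [sysK trv ->]]] /designP [K' [v' [sysK' trv' eq_b]]].
have card_K := card_system_block sysK; have card_K' := card_system_block sysK'.
have eq_K : K = K'.
  by rewrite -(base_graph card_K v) -(base_graph card_K' v') eq_b.
subst K'; move: trv'; rewrite -(graph_inj card_K eq_b) => trv'.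
apply: (enum_match_inj (u0 := [ffun => 0%R]) (card_systems_with card_K));
  rewrite ?inE //.
exact: (translates_disjoint le_tk oaM trv trv').
Qed.

Lemma card_design_blocks_through j (S : {set point}) :
  #|S| = t -> transverse S ->
  #|[set b in design j | S \subset b]| = 1.
Proof.
move=> card_S trS.
have card_base_S : #|base S| = t by rewrite card_base.
have /eqP /cards1P [K blocks_S] := (system_steiner j).2 _ card_base_S.
have /setIdP [sysK baseSK] : K \in [set K in system j | base S \subset K].
  by rewrite blocks_S set11.
have card_K := card_system_block sysK.
have [c [u [inj_c subSE]]] := subset_graph_coords card_K card_S trS baseSK.
suff -> : [set b in design j | S \subset b] =
    graph K @: [set v in translates M (label K j) | [forall m, v (c m) == u m]].
  by rewrite card_imset ?translates_orthogonal_array //; apply: graph_inj.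
apply/setP => b; rewrite inE; apply/andP/imsetP.
  move=> [/designP [K' [v [sysK' trv ->]]] subS].
  have : K' \in [set K in system j | base S \subset K].
    by rewrite inE sysK' -(base_graph (card_system_block sysK') v) imsetS.
  rewrite blocks_S => /set1P eq_K; subst K'.
  by exists v => //; rewrite inE trv -subSE.
move=> [v /setIdP [trv cv] ->]; split; last by rewrite subSE.
by apply/designP; exists K, v.
Qed.

Lemma design_H_design j : H_design point n g k t fibres (design j).
Proof.
split; first exact: hgroups_fibres.
by split; [apply: design_block | apply: card_design_blocks_through].
Qed.

(* design j is empty when the j-th system has no blocks, and a partition has
   no empty part. *)
Definition designs : {set {set {set point}}} :=
  [set design j | j : 'I_(size L)] :\ set0.

Lemma partition_designs : partition designs (transverse_ksets point k fibres).
Proof.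
apply/and3P; split.
- apply/eqP/setP => b; apply/bigcupP/idP.
    move=> [_ /setD1P [_ /imsetP [j _ ->]] /design_block [card_b trb]].
    by rewrite inE card_b eqxx trb.
  move=> /design_cover [j bj]; exists (design j) => //.
  by rewrite !inE imset_f // andbT; apply: contraTneq bj => ->; rewrite inE.
- apply/trivIsetP => A B /setD1P [_ /imsetP [j _ ->]].
  move=> /setD1P [_ /imsetP [j' _ ->]] neq_jj'.
  rewrite disjoint_subset; apply/subsetP => b bj; rewrite inE.
  by apply: contra neq_jj' => bj'; rewrite (design_disjoint bj bj').
- by rewrite !inE eqxx.
Qed.

Lemma large_set_H_designs : large_set_H point n g k t fibres designs.
Proof.
split; first exact: hgroups_fibres.
split; first exact: partition_designs.
by move=> _ /setD1P [_ /imsetP [j _ ->]]; apply: design_H_design.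
Qed.

End Construction.

End Graphs.
End TransverseSets.

Theorem theorem5 (n g k t : nat) :
  0 < n -> 0 < g -> 0 < k -> 0 < t -> t <= k ->
  (exists M : 'I_(g ^ t) -> 'I_k -> 'I_g, orthogonal_array t k g M) ->
  (exists L : seq {set {set 'I_n}}, large_set_mult t k n (g ^ (k - t)) L) ->
  exists (T : finType) (G : {set {set T}}) (P : {set {set {set T}}}),
    large_set_H T n g k t G P.
Proof.
case: n => // n'; case: g => // g'; case: k => // k' _ _ _ _ le_tk.
move=> [M oaM] [L lsL]; exists (point n' g'), (fibres n' g'), (designs M L).
exact: large_set_H_designs.
Qed.
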